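(* There is a constant $c>0$ such that the following holds. Let $k\in\mathbb N$ and let $\Pi$ be a prefix of $k$ temporal operators among $\mathsf X$, $\mathsf F$ and $\mathsf G$. Let $\phi$ be a formula of $\mathsf F(\mathrm{LTL}[\mathsf O])$ and $\psi$ a formula of $\mathrm{LTL}[\mathsf X,\mathsf{wX},\mathsf F,\mathsf G]$ with $\phi\equiv_\omega\psi$. Then the minimal deterministic Büchi automaton for $\mathcal L^\omega(\Pi(\psi))$ has at most $(k+1)\cdot2^{c\cdot\mathrm{size}(\phi)}$ states.
   Context: Let $AP$ be a finite set of atomic propositions and $\Sigma=2^{AP}$. Formulae (negation normal form) are built from literals $p,\neg p$ ($p\in AP$) with $\land,\lor$ and temporal operators $\mathsf X,\mathsf{wX},\mathsf F,\mathsf G,\mathsf O$ (among others). Infinite-trace semantics on $\sigma\in\Sigma^\omega$ at positions $i\in\mathbb N$: literals/Booleans as usual; $\mathsf X\phi$ and $\mathsf{wX}\phi$: $\phi$ holds at $i+1$; $\mathsf F\phi$/$\mathsf G\phi$: $\phi$ at some/every $j\ge i$; $\mathsf O\phi$: $\phi$ at some $0\le j\le i$. $\mathcal L^\omega(\phi)=\{\sigma\in\Sigma^\omega:\sigma,0\models\phi\}$ and $\phi\equiv_\omega\psi$ iff $\mathcal L^\omega(\phi)=\mathcal L^\omega(\psi)$. Size: literals 1, unary operators add 1, binary connectives sum plus 1. $\mathrm{LTL}[S]$: formulae whose temporal operators lie in $S$; $\mathsf F(\mathrm{LTL}[S])$: formulae $\mathsf F(\alpha)$ with $\alpha\in\mathrm{LTL}[S]$.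 $\Pi(\psi)$ denotes the formula obtained by prefixing $\psi$ with the sequence of operators $\Pi$. A deterministic Büchi automaton (DBA) is $(Q,\Sigma,\delta,q_0,F)$ with finite state set $Q$, total transition function $\delta:Q\times\Sigma\to Q$, initial state $q_0$ and accepting set $F\subseteq Q$; it accepts $\sigma\in\Sigma^\omega$ iff its unique run on $\sigma$ visits $F$ infinitely often. The size of a DBA is its number of states. *)

From mathcomp Require Import all_boot.
Set Implicit Arguments.
Unset Strict Implicit.
Unset Printing Implicit Defensive.

Section LTL.
Variable AP : finType.

Definition letter := {set AP}.
Definition trace := nat -> letter.

(* LTL formulae in negation normal form (operators relevant here). *)
Inductive form : Type :=
| Pos of AP
| Neg of AP
| And of form & form
| Or of form & form
| Nxt of form
| WNxt of form
| Fin of form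
| Glob of form
| Once of form.

Fixpoint sat (s : trace) (i : nat) (f : form) : Prop :=
  match f with
  | Pos p => p \in s i
  | Neg p => p \notin s i
  | And a b => sat s i a /\ sat s i b
  | Or a b => sat s i a \/ sat s i b
  | Nxt a => sat s i.+1 a
  | WNxt a => sat s i.+1 a
  | Fin a => exists j, i <= j /\ sat s j a
  | Glob a => forall j, i <= j -> sat s j a
  | Once a => exists j, j <= i /\ sat s j a
  end.

Definition lang (f : form) : trace -> Prop := fun s => sat s 0 f.

Definition omega_equiv (f g : form) : Prop := forall s : trace, lang f s <-> lang g s.

Fixpoint size_form (f : form) : nat :=
  match f with
  | Pos _ | Neg _ => 1
  | And a b | Or a b => size_form a + size_form b + 1
  | Nxt a | WNxt a | Fin a | Glob a | Once a => size_form a + 1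
  end.

Inductive top := opX | opWX | opF | opG | opO.

Definition top_eqb (a b : top) : bool :=
  match a, b with
  | opX, opX | opWX, opWX | opF, opF | opG, opG | opO, opO => true
  | _, _ => false
  end.

Fixpoint in_LTL (S : seq top) (f : form) : bool :=
  match f with
  | Pos _ | Neg _ => true
  | And a b | Or a b => in_LTL S a && in_LTL S b
  | Nxt a => has (top_eqb opX) S && in_LTL S a
  | WNxt a => has (top_eqb opWX) S && in_LTL S a
  | Fin a => has (top_eqb opF) S && in_LTL S a
  | Glob a => has (top_eqb opG) S && in_LTL S a
  | Once a => has (top_eqb opO) S && in_LTL S a
  end.

Definition in_F_LTL (S : seq top) (f : form) : Prop :=
  exists a, f = Fin a /\ in_LTL S a.

Inductive pre_op := pX | pF | pG.

Definition apply_pre (o : pre_op) (f : form) : form :=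
  match o with pX => Nxt f | pF => Fin f | pG => Glob f end.

Definition apply_prefix (Pi : seq pre_op) (f : form) : form :=
  foldr apply_pre f Pi.

Record dba : Type := DBA {
  dba_state : finType;
  dba_delta : dba_state -> letter -> dba_state;
  dba_init : dba_state;
  dba_acc : {set dba_state}
}.

Fixpoint dba_run (A : dba) (s : trace) (n : nat) : dba_state A :=
  match n with
  | 0 => dba_init A
  | n'.+1 => dba_delta (dba_run A s n') (s n')
  end.

Definition dba_accepts (A : dba) (s : trace) : Prop :=
  forall n, exists m, n <= m /\ dba_run A s m \in dba_acc A.

Definition dba_size (A : dba) : nat := #|dba_state A|.

Definition dba_recognizes (A : dba) (L : trace -> Prop) : Prop :=
  forall s, dba_accepts A s <-> L s.

Definition min_dba_at_most (L : trace -> Prop) (N : nat) : Prop :=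
  exists A : dba, dba_recognizes A L /\ dba_size A <= N.

End LTL.

(* Write phi = F alpha with alpha a past formula. As psi is a pure future formula
   equivalent to phi, psi holds at position i of s iff alpha holds somewhere on the
   suffix of s from i, evaluated with the past cut off at i; since alpha looks back
   only through O, this property Q i is downward closed in i. Consequently the
   X-operators of Pi merely shift the position, the F-operators are absorbed, and a
   single G turns Pi(psi) into "Q i for every i". The first language is recognised
   by a deterministic monitor of alpha extended with a "seen alpha" flag, delayed by
   one state per X; the second by the same monitor restarted after each success.
   A monitor of a past formula f has at most 2^size(f) states, so c = 1 works. *)

From mathcomp Require Import all_boot.
From mathcomp Require Import zify.

Section Monitors.
Variable AP : finType.
Implicit Types (s : trace AP) (f : form AP) (A : dba AP).

(* The state of [Once a] records whether [a] held strictly before the current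
   position; operators outside LTL[O] get a dummy state and never hold. *)
Fixpoint past_state f : finType :=
  match f with
  | And a b | Or a b => Finite.clone (past_state a * past_state b)%type _
  | Once a => Finite.clone (bool * past_state a)%type _
  | _ => Finite.clone unit _
  end.

Fixpoint past_holds f : past_state f -> letter AP -> bool :=
  match f return past_state f -> letter AP -> bool with
  | Pos p => fun _ l => p \in l
  | Neg p => fun _ l => p \notin l
  | And a b => fun v l => past_holds a v.1 l && past_holds b v.2 l
  | Or a b => fun v l => past_holds a v.1 l || past_holds b v.2 l
  | Once a => fun v l => v.1 || past_holds a v.2 l
  | _ => fun _ _ => false
  end.

Fixpoint past_step f : past_state f -> letter AP -> past_state f :=
  match f return past_state f -> letter AP -> past_state f with
  | And a b | Or a b => fun v l => (past_step a v.1 l, past_step b v.2 l)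
  | Once a => fun v l => (v.1 || past_holds a v.2 l, past_step a v.2 l)
  | _ => fun v _ => v
  end.

Fixpoint past_init f : past_state f :=
  match f return past_state f with
  | And a b | Or a b => (past_init a, past_init b)
  | Once a => (false, past_init a)
  | _ => tt
  end.

Fixpoint past_run f s j : past_state f :=
  if j is j'.+1 then past_step f (past_run f s j') (s j') else past_init f.

Lemma card_past_state f : #|past_state f| <= 2 ^ size_form f.
Proof.
elim: f => [p|p|a iha b ihb|a iha b ihb|a _|a _|a _|a _|a iha] /=;
  rewrite ?card_prod ?card_unit ?card_bool ?expnD ?expn1 ?muln_gt0 ?expn_gt0 //.
- exact: leq_trans (leq_mul iha ihb) (leq_pmulr _ _).
- exact: leq_trans (leq_mul iha ihb) (leq_pmulr _ _).
- by rewrite mulnC leq_mul2r iha orbT.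
Qed.

Lemma past_run_And a b s j :
  past_run (And a b) s j = (past_run a s j, past_run b s j).
Proof. by elim: j => //= j ->. Qed.

Lemma past_run_Or a b s j :
  past_run (Or a b) s j = (past_run a s j, past_run b s j).
Proof. by elim: j => //= j ->. Qed.

Lemma past_run_Once a s j :
  (past_run (Once a) s j).2 = past_run a s j /\
  ((past_run (Once a) s j).1 <->
     exists2 i, i < j & past_holds a (past_run a s i) (s i)).
Proof.
elim: j => [|j [IH1 IH2]] /=; first by split=> //; split=> // -[].
rewrite IH1; split=> //; split.
  case/orP => [/IH2 [i hi h]|h]; last by exists j.
  by exists i => //; apply: ltnW.
case=> i; rewrite ltnS leq_eqVlt => /orP [/eqP -> ->|hi h]; first by rewrite orbT.
by apply/orP; left; apply/IH2; exists i.
Qed.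

Lemma past_holds_run f s j : in_LTL [:: opO] f ->
  past_holds f (past_run f s j) (s j) <-> sat s j f.
Proof.
elim: f j => [p|p|a iha b ihb|a iha b ihb|a _|a _|a _|a _|a iha] //= j.
- case/andP => ha hb; rewrite past_run_And /=.
  by rewrite -(iha j ha) -(ihb j hb); split => /andP.
- case/andP => ha hb; rewrite past_run_Or /=.
  by rewrite -(iha j ha) -(ihb j hb); split => /orP.
- move=> ha; have [-> E] := past_run_Once a s j; split.
    case/orP => [/E [i hi /(iha i ha) h]|/(iha j ha) h]; last by exists j.
    by exists i; split => //; apply: ltnW.
  case=> i []; rewrite leq_eqVlt => /orP [/eqP -> /(iha j ha) ->|hi /(iha i ha) h].
    by rewrite orbT.
  by apply/orP; left; apply/E; exists i.
Qed.

Definition tr_shift s i : trace AP := fun t => s (i + t).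

Lemma tr_shiftD s i j : tr_shift (tr_shift s i) j =1 tr_shift s (i + j).
Proof. by move=> t; rewrite /tr_shift addnA. Qed.

Lemma sat_eq_trace {s s'} f n : s =1 s' -> sat s n f <-> sat s' n f.
Proof.
move=> E; elim: f n => [p|p|a iha b ihb|a iha b ihb|a iha|a iha|a iha|a iha|a iha] n /=;
  rewrite ?E //; firstorder.
Qed.

Lemma sat_future_shift f s i n : in_LTL [:: opX; opWX; opF; opG] f ->
  sat s (i + n) f <-> sat (tr_shift s i) n f.
Proof.
elim: f n => [p|p|a iha b ihb|a iha b ihb|a iha|a iha|a iha|a iha|a _] n //=.
- by case/andP => /iha ha /ihb hb; rewrite ha hb.
- by case/andP => /iha ha /ihb hb; rewrite ha hb.
- by move/iha => ha; rewrite -ha addnS.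
- by move/iha => ha; rewrite -ha addnS.
- move/iha => ha; split => [[j [hij h]]|[j [hnj h]]].
    by exists (j - i); split; [lia|apply/ha; rewrite subnKC //; lia].
  by exists (i + j); split; [lia|apply/ha].
- move/iha => ha; split => [h j hnj|h j hij].
    by apply/ha; apply: h; lia.
  have hi : i <= j by lia.
  by rewrite -(subnKC hi); apply/ha; apply: h; lia.
Qed.

Lemma sat_past_shift f s d j : in_LTL [:: opO] f ->
  sat (tr_shift s d) j f -> sat s (d + j) f.
Proof.
elim: f j => [p|p|a iha b ihb|a iha b ihb|a _|a _|a _|a _|a iha] j //=.
- by case/andP => /iha ha /ihb hb [/ha h1 /hb h2].
- by case/andP => /iha ha /ihb hb [/ha h|/hb h]; [left|right].
- by move/iha => ha [i [hij /ha h]]; exists (d + i); rewrite leq_add2l.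
Qed.

Lemma sat_past_shift_le {f s d i j} : in_LTL [:: opO] f -> d <= i ->
  sat (tr_shift s i) j f -> sat (tr_shift s d) (i - d + j) f.
Proof.
move=> hf hdi h; apply: sat_past_shift => //.
by apply/(sat_eq_trace _ _ (tr_shiftD s d (i - d))); rewrite subnKC.
Qed.

Definition down_closed (Q : nat -> Prop) := forall i j, i <= j -> Q j -> Q i.

Lemma lang_Fin_shift_down_closed (alpha : form AP) s :
  in_LTL [:: opO] alpha -> down_closed (fun i => lang (Fin alpha) (tr_shift s i)).
Proof.
move=> ha i j hij [t [_ ht]]; exists (j - i + t); split => //.
exact: sat_past_shift_le.
Qed.

Definition is_pX (o : pre_op) := if o is pX then true else false.
Definition is_pG (o : pre_op) := if o is pG then true else false.

Lemma sat_apply_prefix {Q : nat -> Prop} {s psi} Pi i :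
  down_closed Q -> (forall j, sat s j psi <-> Q j) ->
  sat s i (apply_prefix Pi psi) <->
    if has is_pG Pi then forall j, Q j else Q (i + count is_pX Pi).
Proof.
move=> Qdown hpsi; elim: Pi i => [|o Pi IH] i /=; first by rewrite addn0.
case: o => /=.
- by rewrite IH add1n addnS.
- split => [[j [hij /IH]]|/IH hi]; last by exists i.
  case: has => // hj; apply: Qdown hj; lia.
- split => [h j|h j _]; last by apply/IH; case: has.
  move: (h (i + j) (leq_addr _ _)) => /IH; case: has => // hj.
  apply: Qdown hj; lia.
Qed.

Definition dba_delay1 A : dba AP :=
  @DBA AP (Finite.clone (option (dba_state A)) _)
    (fun o l => if o is Some x then Some (dba_delta x l) else Some (dba_init A))
    None [set o | if o is Some x then x \in dba_acc A else false].

Lemma dba_run_delay1 A s t :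
  dba_run (dba_delay1 A) s t.+1 = Some (dba_run A (tr_shift s 1) t).
Proof. by elim: t => //= t ->. Qed.

Lemma dba_accepts_delay1 A s :
  dba_accepts (dba_delay1 A) s <-> dba_accepts A (tr_shift s 1).
Proof.
split => h n.
  have [[|m] [hm]] := h n.+1; rewrite ?dba_run_delay1 inE // => hacc.
  by exists m.
have [m [hm hacc]] := h n.
by exists m.+1; rewrite dba_run_delay1 inE leqW.
Qed.

Fixpoint dba_delay m A := if m is m'.+1 then dba_delay1 (dba_delay m' A) else A.

Lemma dba_accepts_delay m A s :
  dba_accepts (dba_delay m A) s <-> dba_accepts A (tr_shift s m).
Proof. by elim: m s => [|m IH] s //=; rewrite dba_accepts_delay1 IH. Qed.

Lemma dba_size_delay m A : dba_size (dba_delay m A) = m + dba_size A.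
Proof. by elim: m => //= m IH; rewrite /dba_size card_option -/(dba_size _) IH. Qed.

Definition once_dba alpha : dba AP :=
  @DBA AP (past_state (Once alpha)) (past_step (Once alpha))
    (past_init (Once alpha)) [set v | v.1].

Lemma dba_run_once alpha s m : dba_run (once_dba alpha) s m = past_run (Once alpha) s m.
Proof. by elim: m => //= m ->. Qed.

Lemma once_dba_recognizes alpha : in_LTL [:: opO] alpha ->
  dba_recognizes (once_dba alpha) (lang (Fin alpha)).
Proof.
move=> ha s; split.
  case/(_ 0) => m [_]; rewrite inE dba_run_once.
  by case/(proj2 (past_run_Once alpha s m)) => j _ /past_holds_run; exists j; auto.
case=> j [_ /(past_holds_run alpha s j ha) hj] n.
exists (maxn n j.+1); rewrite leq_maxl inE dba_run_once; split => //.
by apply/(proj2 (past_run_Once alpha s _)); exists j; rewrite // leq_max ltnSn orbT.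
Qed.

Definition restart_dba alpha : dba AP :=
  @DBA AP (past_state (Once alpha))
    (fun v l => if past_holds alpha v.2 l then (true, past_init alpha)
                else (false, past_step alpha v.2 l))
    (past_init (Once alpha)) [set v | v.1].

Section Restart.
Variables (alpha : form AP) (s : trace AP).
Hypothesis ha : in_LTL [:: opO] alpha.

Local Notation run := (dba_run (restart_dba alpha) s).

Definition fires m := past_holds alpha (run m).2 (s m).

Fixpoint last_restart m :=
  if m is m'.+1 then (if fires m' then m else last_restart m') else 0.

Lemma last_restart_le m : last_restart m <= m.
Proof. by elim: m => //= m IH; case: ifP => // _; apply: leqW. Qed.

Lemma last_restart_homo : {homo last_restart : m n / m <= n}.
Proof.
apply: homo_leq leqnn leq_trans _ => m /=.
by case: ifP => // _; apply: leqW; apply: last_restart_le.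
Qed.

Lemma run_restart m :
  (run m).2 = past_run alpha (tr_shift s (last_restart m)) (m - last_restart m).
Proof.
elim: m => [|m IH] //=; rewrite /fires; case: ifP => _ /=; first by rewrite subnn.
rewrite subSn ?last_restart_le //= -IH /tr_shift subnKC //; exact: last_restart_le.
Qed.

Lemma fires_sat m :
  fires m <-> sat (tr_shift s (last_restart m)) (m - last_restart m) alpha.
Proof.
rewrite /fires run_restart -past_holds_run //.
by rewrite /tr_shift subnKC // last_restart_le.
Qed.

Lemma restart_dba_accepts_fires :
  dba_accepts (restart_dba alpha) s <-> forall n, exists2 m, n <= m & fires m.
Proof.
have acc m : (run m.+1 \in dba_acc (restart_dba alpha)) = fires m.
  by rewrite inE /= /fires; case: ifP.
split => h n.
  have [[|m] [hnm]] := h n.+1; rewrite ?acc // => hm.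
  by exists m.
have [m hnm hm] := h n.
by exists m.+1; rewrite acc hm leqW.
Qed.

(* The restart point can only move forward to just after a firing, so a witness
   for alpha seen from the current restart point forces a firing in between. *)
Lemma fires_after d n :
  sat (tr_shift s (last_restart n)) (n - last_restart n + d) alpha ->
  exists2 m, n <= m & fires m.
Proof.
elim: d n => [|d IH] n h.
  by exists n => //; apply/fires_sat; rewrite addn0 in h.
case hn: (fires n); first by exists n.
have [|m hm hfm] := IH n.+1; last by exists m => //; apply: ltnW.
by rewrite /= hn subSn ?last_restart_le // addSnnS.
Qed.

Lemma restart_dba_accepts :
  dba_accepts (restart_dba alpha) s <-> forall i, lang (Fin alpha) (tr_shift s i).
Proof.
rewrite restart_dba_accepts_fires; split => h i.
  have [p hip hp] := h i.
  have [q hpq /fires_sat hq] := h p.+1.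
  have hp1 : last_restart p.+1 = p.+1 by rewrite /= hp.
  have hiq : i <= last_restart q.
    by rewrite (leq_trans hip) // (leq_trans (leqnSn p)) // -{1}hp1 last_restart_homo.
  by apply: (lang_Fin_shift_down_closed alpha s ha _ _ hiq); exists (q - last_restart q).
have [j [_ hj]] := h i.
exact: (fires_after j) (sat_past_shift_le ha (last_restart_le i) hj).
Qed.

End Restart.

Lemma min_dba_prefix_F_past Pi (phi psi : form AP) :
  in_F_LTL [:: opO] phi -> in_LTL [:: opX; opWX; opF; opG] psi ->
  omega_equiv phi psi ->
  min_dba_at_most (lang (apply_prefix Pi psi)) ((size Pi).+1 * 2 ^ size_form phi).
Proof.
move=> [alpha [-> ha]] hpsi heq.
pose Q s i := lang (Fin alpha) (tr_shift s i).
have sat_psi s i : sat s i psi <-> Q s i.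
  by rewrite -{1}[i]addn0 sat_future_shift //; symmetry; apply: heq.
have lang_Pi s : lang (apply_prefix Pi psi) s <->
    if has is_pG Pi then forall i, Q s i else Q s (count is_pX Pi).
  exact: (sat_apply_prefix Pi 0 (lang_Fin_shift_down_closed alpha s ha) (sat_psi s)).
have card_once : #|past_state (Once alpha)| <= 2 ^ size_form (Fin alpha).
  exact: card_past_state.
case: (has is_pG Pi) in lang_Pi.
  exists (restart_dba alpha); split; last exact: leq_trans card_once (leq_pmull _ _).
  by move=> s; rewrite lang_Pi restart_dba_accepts.
exists (dba_delay (count is_pX Pi) (once_dba alpha)); split.
  by move=> s; rewrite lang_Pi dba_accepts_delay once_dba_recognizes.
rewrite dba_size_delay mulSn addnC leq_add //.
by rewrite (leq_trans (count_size _ _)) // leq_pmulr ?expn_gt0.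
Qed.

End Monitors.

Theorem theorem4 :
  exists c : nat, 0 < c /\
  forall (AP : finType) (k : nat) (Pi : seq pre_op) (phi psi : form AP),
    size Pi = k ->
    in_F_LTL [:: opO] phi ->
    in_LTL [:: opX; opWX; opF; opG] psi ->
    omega_equiv phi psi ->
    min_dba_at_most (lang (apply_prefix Pi psi)) (k.+1 * 2 ^ (c * size_form phi)).
Proof.
exists 1; split => // AP k Pi phi psi <-; rewrite mul1n.
exact: min_dba_prefix_F_past.
Qed.
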